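(* For every $\varepsilon>0$ the following holds. Let $F\in\mathcal{F}_E$ be an $r$-graph and let $D$ be its diameter. For the class consisting of all input $r$-graphs $G$ with average degree $d$ and maximum degree $\Delta(G)=O(d)$, there exists an $\varepsilon$-tester for $F$-freeness with $O_\varepsilon(d^{D})$ queries.
   Context: Distances in an $r$-graph: a path between $u$ and $v$ is a sequence of edges whose vertices admit a labelling $u,v_1,\dots,v_k,v$ with consecutive vertices in a common edge and each edge consisting of consecutive vertices; $\mathrm{dist}(u,v)$ is the minimum number of edges of such a path ($0$ if $u=v$), $\mathrm{dist}(S,T):=\min_{s\in S,t\in T}\mathrm{dist}(s,t)$, and the diameter $D_F$ is the maximum distance between two vertices. For an edge $e\in F$ let $V_i(e):=\{u\in V(F):\mathrm{dist}(e,u)=i\}$ for $i\in[D_F]$, and $F[S]$ the set of edges of $F$ contained in $S$. $\mathcal{F}_E:=\{F:|F[V_{D_F}(e)]|=0\text{ for all }e\in F\}$. Testing model: the input $r$-graph $G$ with $m$ edges has a fixed ordering of the edges at each vertex; queries are vertex-set queries and neighbour queries (the $i$-th edge at vertex $v$). $G$ is $\varepsilon$-far from $F$-free if at least $\varepsilon m$ edges must be added or deleted to make it $F$-free. A tester accepts $F$-free inputs with probability $\ge2/3$ and rejects far inputs with probability $\ge2/3$; an $\varepsilon$-tester is valid for all distance parameters $\varepsilon'\ge\varepsilon$. $O_\varepsilon$ allows dependence on $\varepsilon$ (and $F$) but not on $n$. *)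

From HB Require Import structures.
From mathcomp Require Import all_boot all_order all_algebra.
From mathcomp Require Import reals.
Set Implicit Arguments. Unset Strict Implicit. Unset Printing Implicit Defensive.
Import Order.TTheory GRing.Theory Num.Theory.
Local Open Scope ring_scope.

Definition uniform (V : finType) (r : nat) (E : {set {set V}}) : Prop :=
  forall e, e \in E -> #|e| = r.

(* es is a sequence of edges, w a labelling (injective enumeration) of the
   vertices of these edges, starting at u and ending at v, such that
   consecutive vertices lie in a common edge of es and each edge of es is a
   block of consecutive vertices of w. *)
Definition path_ok (V : finType) (E : {set {set V}}) (u v : V)
    (es : seq {set V}) (w : seq V) : Prop :=
  [/\ all (fun e => e \in E) es /\ uniq w,
      [/\ (0 < size w)%N, nth u w 0 = u & last u w = v],
      (forall x, (x \in w) = has (fun e : {set V} => x \in e) es),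
      (forall i, (i.+1 < size w)%N ->
         exists2 e, e \in es & (nth u w i \in e) && (nth u w i.+1 \in e)) &
      (forall e, e \in es -> exists i j : nat,
         forall x, (x \in e) = (x \in w) && (i <= index x w < j)%N)].

Definition pathlen (V : finType) (E : {set {set V}}) (u v : V) (k : nat) : Prop :=
  (u = v /\ k = 0%N) \/ exists es w, path_ok E u v es w /\ size es = k.

Definition dist_is (V : finType) (E : {set {set V}}) (u v : V) (k : nat) : Prop :=
  pathlen E u v k /\ forall k', pathlen E u v k' -> (k <= k')%N.

Definition setdist_is (V : finType) (E : {set {set V}}) (S : {set V}) (u : V)
    (k : nat) : Prop :=
  (exists2 s, s \in S & dist_is E s u k) /\
  forall s k', s \in S -> dist_is E s u k' -> (k <= k')%N.

Definition hconnected (V : finType) (E : {set {set V}}) : Prop :=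
  forall u v : V, exists k, pathlen E u v k.

Definition diam_is (V : finType) (E : {set {set V}}) (D : nat) : Prop :=
  (exists u v, dist_is E u v D) /\ forall u v k, dist_is E u v k -> (k <= D)%N.

(* F in F_E : for every edge e, F[V_{D_F}(e)] has no edges *)
Definition in_FE (V : finType) (E : {set {set V}}) : Prop :=
  forall D, diam_is E D -> forall e f, e \in E -> f \in E ->
    ~ (forall x, x \in f -> setdist_is E e x D).

Definition contains_copy (V : finType) (F : {set {set V}}) (n : nat)
    (G : {set {set 'I_n}}) : Prop :=
  exists f : V -> 'I_n, injective f /\ forall e, e \in F -> f @: e \in G.

Definition Ffree (V : finType) (F : {set {set V}}) (n : nat)
    (G : {set {set 'I_n}}) : Prop := ~ contains_copy F G.

Definition far (R : realType) (eps : R) (r : nat) (V : finType)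
    (F : {set {set V}}) (n : nat) (G : {set {set 'I_n}}) : Prop :=
  forall H : {set {set 'I_n}}, uniform r H -> Ffree F H ->
    eps * #|G|%:R <= (#|G :\: H| + #|H :\: G|)%:R.

Definition deg (n : nat) (G : {set {set 'I_n}}) (v : 'I_n) : nat :=
  #|[set e in G | v \in e]|.

Definition avgdeg (R : realType) (n : nat) (G : {set {set 'I_n}}) : R :=
  (\sum_(v : 'I_n) (deg G v)%:R) / n%:R.

Definition maxdeg (n : nat) (G : {set {set 'I_n}}) : nat :=
  \max_(v : 'I_n) deg G v.

(* The fixed ordering of the edges at each vertex: ord v lists, without
   repetition, exactly the edges of G containing v. *)
Definition valid_order (n : nat) (G : {set {set 'I_n}})
    (ord : 'I_n -> seq {set 'I_n}) : Prop :=
  forall v, uniq (ord v) /\ forall e, (e \in ord v) = (e \in G) && (v \in e).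

(* Randomized adaptive query algorithms (decision trees). *)
Inductive alg (n : nat) : Type :=
  | Ret of bool
  | QSet of {set 'I_n} & (bool -> alg n)                 (* is S an edge? *)
  | QNb of 'I_n & nat & (option {set 'I_n} -> alg n)     (* i-th edge at v *)
  | QRand (k : nat) of ('I_k.+1 -> alg n).                (* uniform random choice *)

Definition nb_answer (n : nat) (ord : 'I_n -> seq {set 'I_n}) (v : 'I_n) (i : nat)
  : option {set 'I_n} :=
  if (i < size (ord v))%N then Some (nth set0 (ord v) i) else None.

Fixpoint acc_prob (R : realType) (n : nat) (G : {set {set 'I_n}})
    (ord : 'I_n -> seq {set 'I_n}) (A : alg n) : R :=
  match A with
  | Ret b => if b then 1 else 0
  | QSet T k => acc_prob R G ord (k (T \in G))
  | QNb v i k => acc_prob R G ord (k (nb_answer ord v i))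
  | QRand k f => (\sum_(j : 'I_k.+1) acc_prob R G ord (f j)) / k.+1%:R
  end.

Fixpoint nqueries (n : nat) (A : alg n) : nat :=
  match A with
  | Ret _ => 0
  | QSet _ k => (maxn (nqueries (k true)) (nqueries (k false))).+1
  | QNb _ _ k => (\max_(o : option {set 'I_n}) nqueries (k o)).+1
  | QRand k f => \max_(j : 'I_k.+1) nqueries (f j)
  end.

(* The tester samples a uniformly random pair (v, i) of a vertex v and an index
   i <= K := floor(c d), which bounds the maximum degree, queries the i-th edge
   e at v, collects by D rounds of breadth-first search every edge through a
   vertex within D - 1 hops of e (at most (1 + r K)^D queries), and rejects if
   these edges contain a copy of F; this is repeated T = O(c / eps) times.
   An F-free graph is never rejected.  If G is eps-far from F-free, deleting
   the edges lying in copies of F makes it F-free, so at least eps |G| edges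
   lie in copies of F, and a sampled pair hits one of them with probability at
   least r eps |G| / (n (K + 1)) >= eps / (2 c), as r |G| = n d and
   K + 1 <= 2 c d.  Since F is in F_E, every edge of a copy of F through e has
   a vertex within distance D - 1 of e, so the search around e finds the whole
   copy. *)

From HB Require Import structures.
From mathcomp Require Import all_boot all_order all_algebra.
From mathcomp Require Import reals.
From mathcomp Require Import zify lra.
From Stdlib Require Import Classical_Prop.
Import Order.TTheory GRing.Theory Num.Theory.
Local Open Scope ring_scope.

Set Implicit Arguments. Unset Strict Implicit. Unset Printing Implicit Defensive.

Section Combinators.
Variable n : nat.

Fixpoint alg_and (A B : alg n) : alg n :=
  match A with
  | Ret b => if b then B else Ret n false
  | QSet T k => QSet T (fun b => alg_and (k b) B)
  | QNb v i k => QNb v i (fun o => alg_and (k o) B)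
  | QRand k f => QRand (fun j => alg_and (f j) B)
  end.

Fixpoint alg_repeat (A : alg n) (T : nat) : alg n :=
  if T is T'.+1 then alg_and A (alg_repeat A T') else Ret n true.

Fixpoint query_nbs (qs : seq ('I_n * nat))
    (cont : seq (option {set 'I_n}) -> alg n) : alg n :=
  if qs is q :: qs' then QNb q.1 q.2 (fun o => query_nbs qs' (fun os => cont (o :: os)))
  else cont [::].

Lemma nqueries_alg_and A B : (nqueries (alg_and A B) <= nqueries A + nqueries B)%N.
Proof.
elim: A => [[]|T k IH|v i k IH|k f IH] //=.
- by rewrite addSn ltnS geq_max !(leq_trans (IH _)) // leq_add2r (leq_maxl, leq_maxr).
- rewrite addSn ltnS; apply/bigmax_leqP => o _.
  by rewrite (leq_trans (IH o)) // leq_add2r (leq_bigmax o).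
- apply/bigmax_leqP => j _.
  by rewrite (leq_trans (IH j)) // leq_add2r (leq_bigmax j).
Qed.

Lemma nqueries_alg_repeat A T : (nqueries (alg_repeat A T) <= T * nqueries A)%N.
Proof.
elim: T => [|T IH] //=.
by rewrite (leq_trans (nqueries_alg_and _ _)) // mulSn leq_add2l.
Qed.

Lemma nqueries_query_nbs qs cont b :
  (forall os, size os = size qs -> (nqueries (cont os) <= b)%N) ->
  (nqueries (query_nbs qs cont) <= size qs + b)%N.
Proof.
elim: qs cont => [|q qs IH] cont Hcont /=; first exact: Hcont.
rewrite addSn ltnS; apply/bigmax_leqP => o _; apply: IH => os Hos.
by apply: Hcont; rewrite /= Hos.
Qed.

Variables (R : realType) (G : {set {set 'I_n}}) (ord : 'I_n -> seq {set 'I_n}).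
Local Notation acc := (acc_prob R G ord).

Lemma acc_prob_ge0 A : 0 <= acc A.
Proof.
elim: A => [[]|T k IH|v i k IH|k f IH] //=.
by rewrite divr_ge0 // sumr_ge0.
Qed.

Lemma acc_prob_le1 A : acc A <= 1.
Proof.
elim: A => [[]|T k IH|v i k IH|k f IH] //=.
rewrite ler_pdivrMr ?ltr0Sn // mul1r.
by rewrite (le_trans (ler_sum _ (fun j _ => IH j))) // sumr_const card_ord.
Qed.

Lemma acc_prob_alg_and A B : acc (alg_and A B) = acc A * acc B.
Proof.
elim: A => [[]|T k IH|v i k IH|k f IH] /=; rewrite ?mul1r ?mul0r //.
by under eq_bigr do rewrite IH; rewrite -mulr_suml mulrAC.
Qed.

Lemma acc_prob_alg_repeat A T : acc (alg_repeat A T) = acc A ^+ T.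
Proof. by elim: T => [|T IH] //=; rewrite acc_prob_alg_and IH exprS. Qed.

Lemma acc_prob_query_nbs qs cont :
  acc (query_nbs qs cont) = acc (cont [seq nb_answer ord q.1 q.2 | q <- qs]).
Proof. by elim: qs cont => //= q qs IH cont; rewrite IH. Qed.

End Combinators.

Section Exploration.
Variables n r K : nat.

Definition nbs_queries (L : seq 'I_n) : seq ('I_n * nat) :=
  [seq (v, i) | v <- L, i <- iota 0 K].

(* Answers that are not r-sets are discarded: on r-uniform inputs this changes
   nothing, but it makes the query bound hold for every sequence of answers. *)
Definition r_edges (os : seq (option {set 'I_n})) : seq {set 'I_n} :=
  [seq e : {set 'I_n} <- pmap id os | #|e| == r].

Definition edge_vertices os : seq 'I_n :=
  flatten [seq enum e | e : {set 'I_n} <- r_edges os].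

Fixpoint explore (j : nat) (L : seq 'I_n) (Ec : seq {set 'I_n})
    (cont : seq {set 'I_n} -> alg n) : alg n :=
  if j is j'.+1 then
    query_nbs (nbs_queries L)
      (fun os => explore j' (L ++ edge_vertices os) (Ec ++ r_edges os) cont)
  else cont Ec.

Lemma size_edge_vertices os : (size (edge_vertices os) <= r * size os)%N.
Proof.
elim: os => [|[e|] os IH] //=; rewrite /edge_vertices /r_edges /=.
  case: eqP => [He|_] /=; last by rewrite (leq_trans IH) // leq_mul2l leqnSn orbT.
  by rewrite size_cat -cardE He mulnS leq_add2l.
by rewrite (leq_trans IH) // leq_mul2l leqnSn orbT.
Qed.

Lemma nqueries_explore j L Ec cont b :
  (forall Ec', (nqueries (cont Ec') <= b)%N) ->
  (nqueries (explore j L Ec cont) <= size L * K * \sum_(i < j) (1 + r * K) ^ i + b)%N.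
Proof.
move=> Hcont; elim: j L Ec => [|j IH] L Ec /=; first by rewrite big_ord0 muln0.
set S := (\sum_(i < j) (1 + r * K) ^ i)%N.
have -> : (\sum_(i < j.+1) (1 + r * K) ^ i = 1 + (1 + r * K) * S)%N.
  rewrite big_ord_recl expn0 big_distrr; congr (1 + _)%N.
  by apply: eq_bigr => i _; rewrite expnS.
have Hq : size (nbs_queries L) = (size L * K)%N by rewrite size_allpairs size_iota.
apply: leq_trans (nqueries_query_nbs (b := size L * (1 + r * K) * K * S + b) _) _.
  move=> os Hos; rewrite (leq_trans (IH _ _)) // leq_add2r !leq_mul2r.
  have := size_edge_vertices os; rewrite size_cat Hos Hq; nia.
rewrite Hq; nia.
Qed.

End Exploration.

Section ExplorationSemantics.
Variables (n : nat) (ord : 'I_n -> seq {set 'I_n}) (r K : nat).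

Definition nbs_answers (L : seq 'I_n) : seq (option {set 'I_n}) :=
  [seq nb_answer ord q.1 q.2 | q <- nbs_queries K L].

Fixpoint explored (j : nat) (L : seq 'I_n) (Ec : seq {set 'I_n}) : seq {set 'I_n} :=
  if j is j'.+1 then
    explored j' (L ++ edge_vertices r (nbs_answers L)) (Ec ++ r_edges r (nbs_answers L))
  else Ec.

Lemma acc_prob_explore (R : realType) G j L Ec cont :
  acc_prob R G ord (explore r K j L Ec cont) = acc_prob R G ord (cont (explored j L Ec)).
Proof. by elim: j L Ec => //= j IH L Ec; rewrite acc_prob_query_nbs IH. Qed.

End ExplorationSemantics.

Lemma count_lt_subpred (T : eqType) (a b : pred T) s x :
  subpred a b -> x \in s -> b x -> ~~ a x -> (count a s < count b s)%N.
Proof.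
move=> Hab; elim: s => // y s IH; rewrite in_cons => /orP[/eqP <-|Hx] Hb Ha /=.
  by rewrite Hb (negbTE Ha) add0n add1n ltnS sub_count.
have := IH Hx Hb Ha; case Hay: (a y); first by rewrite (Hab _ Hay); lia.
by case: (b y); lia.
Qed.

Section Hops.
Variables (T : finType) (E : {set {set T}}).

Fixpoint hops (k : nat) (u y : T) : Prop :=
  if k is k'.+1 then
    hops k' u y \/ exists2 g, g \in E & u \in g /\ exists2 z, z \in g & hops k' z y
  else u = y.

Lemma hops_le k k' u y : (k <= k')%N -> hops k u y -> hops k' u y.
Proof.
move/subnK <-; elim: (k' - k)%N => [|m IH] H //=.
by left; exact: IH.
Qed.

Lemma hops_snoc k u z g y :
  hops k u z -> g \in E -> z \in g -> y \in g -> hops k.+1 u y.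
Proof.
elim: k u => [|k IH] u /= Hk Hg Hz Hy.
  by subst u; right; exists g => //; split => //; exists y.
case: Hk => [Hk|[g' Hg' [Hu [z' Hz' Hk]]]]; first by left; exact: IH Hk Hg Hz Hy.
by right; exists g' => //; split => //; exists z' => //; exact: IH Hk Hg Hz Hy.
Qed.

Section PathHops.
Variables (u x : T) (es : seq {set T}) (w : seq T).
Hypotheses (E_nonempty : forall g, g \in E -> g != set0) (Hpath : path_ok E u x es w).

(* Every vertex of an edge [g] of the path is within [rank g] hops of [u], where
   [rank g] counts the edges of the path entered by [w] no later than [g]. *)
Let first (g : {set T}) := find (mem g) w.
Let rank (g : {set T}) := count (fun g' => (first g' <= first g)%N) es.

Let hops_rank N g : g \in es -> (first g <= N)%N -> forall y, y \in g -> hops (rank g) u y.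
Proof.
have [[Hes _] [_ Hhead _] Hmem Hcons _] := Hpath.
have HgE g' : g' \in es -> g' \in E by move/(allP Hes).
have Hhas g' : g' \in es -> has (mem g') w.
  move=> Hg'; have /set0Pn [y Hy] := E_nonempty (HgE g' Hg').
  by apply/hasP; exists y; rewrite // Hmem; apply/hasP; exists g'.
have Hfirst g' : g' \in es -> nth u w (first g') \in g' by move/Hhas/(nth_find u).
elim: N g => [|N IHN] g Hg HgN y Hy.
  have Hu : u \in g by move: HgN (Hfirst g Hg); rewrite leqn0 => /eqP ->; rewrite Hhead.
  have rank_gt0 : (0 < rank g)%N by rewrite -has_count; apply/hasP; exists g => /=.
  by apply: (hops_le rank_gt0); right; exists g; [exact: HgE | split => //; exists y].
have [HgN'|HgN'] := leqP (first g) N; first exact: IHN.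
have Hg_eq : first g = N.+1 by apply/eqP; rewrite eqn_leq HgN.
have [g' Hg' /andP [HNg' HSNg']] : exists2 g', g' \in es &
    (nth u w N \in g') && (nth u w N.+1 \in g').
  by apply: Hcons; rewrite -Hg_eq -has_find; exact: Hhas.
have Hg'N : (first g' <= N)%N.
  by rewrite leqNgt; apply/negP => /(before_find u) /=; rewrite HNg'.
have Hrank : (rank g' < rank g)%N.
  apply: (count_lt_subpred (x := g)) => //=; last by rewrite -ltnNge Hg_eq ltnS.
  by move=> g'' /= /leq_trans; apply; rewrite Hg_eq (leq_trans Hg'N).
have HSNg : nth u w N.+1 \in g by rewrite -Hg_eq; exact: Hfirst.
exact: hops_le Hrank (hops_snoc (IHN g' Hg' Hg'N _ HSNg') (HgE g Hg) HSNg Hy).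
Qed.

Lemma path_ok_hops : hops (size es) u x.
Proof.
have [_ [Hw0 _ Hlast] Hmem _ _] := Hpath.
have : x \in w by rewrite -Hlast -nth_last mem_nth // ltn_predL.
rewrite Hmem => /hasP [g Hg Hxg].
exact: hops_le (count_size _ _) (hops_rank Hg (find_size _ _) Hxg).
Qed.

End PathHops.
End Hops.

Lemma hops_imset (T T' : finType) (E : {set {set T}}) (E' : {set {set T'}})
    (f : T -> T') :
  (forall g, g \in E -> f @: g \in E') ->
  forall k u y, hops E k u y -> hops E' k (f u) (f y).
Proof.
move=> Hf; elim=> [|k IH] u y /=; first by move->.
case=> [H|[g Hg [Hu [z Hz H]]]]; first by left; exact: IH.
right; exists (f @: g); first exact: Hf.
by split; [exact: imset_f | exists (f z); [exact: imset_f | exact: IH]].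
Qed.

Lemma ex_minn_prop (P : nat -> Prop) :
  (exists k, P k) -> exists k, P k /\ forall k', P k' -> (k <= k')%N.
Proof.
move=> Hex; have [k [[Pk Hmin] _]] :=
  Wf_nat.dec_inh_nat_subset_has_unique_least_element P (fun k => classic (P k)) Hex.
by exists k; split => // k' /Hmin /ssrnat.leP.
Qed.

Section NearEdges.
Variables (V : finType) (F : {set {set V}}) (r D : nat).
Hypotheses (r_gt0 : (0 < r)%N) (F_unif : uniform r F) (F_conn : hconnected F)
  (F_FE : in_FE F) (F_diam : diam_is F D).

Lemma edge_neq0 g : g \in F -> g != set0.
Proof. by move=> Hg; rewrite -card_gt0 (F_unif Hg). Qed.

Lemma pathlen_hops s x k : pathlen F s x k -> hops F k s x.
Proof.
case=> [[-> ->]|[es [w [Hpath <-]]]] //.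
exact: path_ok_hops edge_neq0 Hpath.
Qed.

Lemma setdist_exists e x : e \in F -> exists k, setdist_is F e x k.
Proof.
move=> He; have /set0Pn [s0 Hs0] := edge_neq0 He.
have Hex : exists k, exists2 s, s \in e & dist_is F s x k.
  by have [k Hk] := ex_minn_prop (F_conn s0 x); exists k, s0.
have [k [[s Hs Hsk] Hmin]] := ex_minn_prop Hex.
by exists k; split; [exists s | move=> s' k' Hs' Hs'k'; apply: Hmin; exists s'].
Qed.

(* This is where [F \in F_E] is used: were every vertex of [h] at distance at
   least [D] from [e], it would be at distance exactly [D], the diameter. *)
Lemma in_FE_hops e h : e \in F -> h \in F ->
  exists x s k, [/\ x \in h, s \in e, (k < D)%N & hops F k s x].
Proof.
move=> He Hh; apply: NNPP => Hfar; apply: (F_FE F_diam He Hh) => x Hx.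
have [k Hk] := setdist_exists x He; have [[s Hs Hsk] _] := Hk.
suff -> : D = k by [].
apply/eqP; rewrite eqn_leq (F_diam.2 _ _ _ Hsk) leqNgt andbT; apply/negP => HkD.
by apply: Hfar; exists x, s, k; split => //; apply: pathlen_hops; case: Hsk.
Qed.

End NearEdges.

Section Copies.
Variables (V : finType) (F : {set {set V}}) (n : nat).

Definition has_copy_in (Ec : seq {set 'I_n}) : bool :=
  [exists f : {ffun V -> 'I_n}, injectiveb f && [forall h in F, f @: h \in Ec]].

Definition copy_edges (G : {set {set 'I_n}}) : {set {set 'I_n}} :=
  [set g | [exists f : {ffun V -> 'I_n},
     [&& injectiveb f, [forall h in F, f @: h \in G] & [exists e in F, g == f @: e]]]].

Lemma imset_finfun (f : V -> 'I_n) (h : {set V}) : finfun f @: h = f @: h.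
Proof. by apply: eq_imset => x; rewrite ffunE. Qed.

Lemma injectiveb_finfun (f : V -> 'I_n) : injective f -> injectiveb (finfun f).
Proof. by move=> f_inj; apply/injectiveP => x y; rewrite !ffunE => /f_inj. Qed.

Lemma has_copy_inP (Ec : seq {set 'I_n}) :
  reflect (exists f : V -> 'I_n, injective f /\ {in F, forall h : {set V}, f @: h \in Ec})
    (has_copy_in Ec).
Proof.
apply: (iffP existsP) => [[f /andP [/injectiveP f_inj /forall_inP f_Ec]]|[f [f_inj f_Ec]]].
  by exists f.
exists (finfun f); rewrite injectiveb_finfun //=.
by apply/forall_inP => h Hh; rewrite imset_finfun f_Ec.
Qed.

Lemma copy_edgesP (G : {set {set 'I_n}}) g :
  reflect (exists f : V -> 'I_n,
             [/\ injective f, {in F, forall h : {set V}, f @: h \in G}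
                & exists2 e, e \in F & g = f @: e])
    (g \in copy_edges G).
Proof.
rewrite inE; apply: (iffP existsP).
  move=> [f /and3P [/injectiveP f_inj /forall_inP f_G /exists_inP [e He /eqP ->]]].
  by exists f; split => //; exists e.
move=> [f [f_inj f_G [e He ->]]]; exists (finfun f).
rewrite injectiveb_finfun //=; apply/andP; split.
  by apply/forall_inP => h Hh; rewrite imset_finfun f_G.
by apply/exists_inP; exists e; rewrite ?imset_finfun.
Qed.

Lemma copy_edges_sub G : {subset copy_edges G <= G}.
Proof. by move=> g /copy_edgesP [f [_ f_G [e He ->]]]; exact: f_G. Qed.

Lemma has_copy_in_sound (G : {set {set 'I_n}}) (Ec : seq {set 'I_n}) :
  {subset Ec <= G} -> has_copy_in Ec -> contains_copy F G.
Proof.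
by move=> EcG /has_copy_inP [f [f_inj f_Ec]]; exists f; split => // h /f_Ec /EcG.
Qed.

Lemma Ffree_setD_copy_edges G : ~~ has_copy_in [::] -> Ffree F (G :\: copy_edges G).
Proof.
move=> no_copy [f [f_inj f_G]].
have [F0|[e He]] := set_0Vmem F.
  by move/negP: no_copy; apply; apply/has_copy_inP; exists f; split => // h; rewrite F0 inE.
have /setDP [_ /negP] := f_G e He; apply; apply/copy_edgesP; exists f; split => //.
- by move=> h /f_G /setDP [].
- by exists e.
Qed.

Lemma far_copy_edges (R : realType) (eps : R) r G :
  uniform r G -> ~~ has_copy_in [::] -> far eps r F G ->
  eps * #|G|%:R <= #|copy_edges G|%:R.
Proof.
move=> G_unif no_copy G_far.
have := G_far _ (fun e He => G_unif e (setDP He).1) (@Ffree_setD_copy_edges G no_copy).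
have -> : (G :\: copy_edges G) :\: G = set0 by apply/eqP; rewrite setD_eq0 subsetDl.
rewrite cards0 addn0 setDDr setDv set0U (setIidPr _) //.
by apply/subsetP; exact: copy_edges_sub.
Qed.

End Copies.

Lemma sum_card_incident (T : finType) (A : {set {set T}}) r :
  uniform r A -> (\sum_(v : T) #|[set e in A | v \in e]| = r * #|A|)%N.
Proof.
move=> A_unif.
have incident v : #|[set e in A | v \in e]| = (\sum_(e in A) (v \in e))%N.
  rewrite -sum1_card big_mkcond [RHS]big_mkcond; apply: eq_bigr => e _ /=.
  by rewrite inE; case: (e \in A); case: (v \in e).
rewrite (eq_bigr _ (fun v _ => incident v)) exchange_big /= mulnC -sum_nat_const.
apply: eq_bigr => e He; rewrite -(A_unif e He) -sum1_card [RHS]big_mkcond /=.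
by apply: eq_bigr => v _; case: (v \in e).
Qed.

Lemma sum_nth_count (T : eqType) (x0 : T) (s : seq T) (P : pred T) K :
  (size s <= K)%N -> (\sum_(i < K) ((i < size s) && P (nth x0 s i)) = count P s)%N.
Proof.
move=> sK; rewrite -sum1_count (big_nth x0) big_mkord.
rewrite (big_ord_widen_cond _ (fun i => P (nth x0 s i)) (fun=> 1%N) sK).
by rewrite [RHS]big_mkcond; apply: eq_bigr => i _; rewrite andbC; case: (_ && _).
Qed.

Section NeighbourOrderings.
Variables (n : nat) (G : {set {set 'I_n}}) (ord : 'I_n -> seq {set 'I_n}).
Hypothesis ord_valid : valid_order G ord.

Lemma count_mem_ord (A : {set {set 'I_n}}) v :
  {subset A <= G} -> count [in A] (ord v) = #|[set e in A | v \in e]|.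
Proof.
move=> AG; rewrite -size_filter.
have /card_uniqP <- := filter_uniq [in A] (ord_valid v).1.
apply: eq_card => e; rewrite mem_filter inE (ord_valid v).2.
by case He: (e \in A) => //=; rewrite (AG e He).
Qed.

Lemma size_ord v : size (ord v) = deg G v.
Proof.
rewrite /deg -(count_mem_ord v (fun e => id)); apply/esym/eqP; rewrite -all_count.
by apply/allP => e; rewrite (ord_valid v).2 => /andP [].
Qed.

Lemma nb_answer_in v i e : nb_answer ord v i = Some e -> e \in G.
Proof.
rewrite /nb_answer; case: ifP => // Hi [<-].
by have := mem_nth set0 Hi; rewrite (ord_valid v).2 => /andP [].
Qed.

End NeighbourOrderings.

Section ExplorationReach.
Variables (n r K : nat) (G : {set {set 'I_n}}) (ord : 'I_n -> seq {set 'I_n}).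
Hypotheses (G_unif : uniform r G) (ord_valid : valid_order G ord)
  (deg_le : forall v, (deg G v <= K)%N).

Lemma r_edges_answers_sub L : {subset r_edges r (nbs_answers ord K L) <= G}.
Proof.
move=> e; rewrite mem_filter mem_pmap map_id => /andP [_ /mapP [q _ /esym]].
exact: nb_answer_in.
Qed.

Lemma explored_sub j L Ec : {subset Ec <= G} -> {subset explored ord r K j L Ec <= G}.
Proof.
elim: j L Ec => //= j IH L Ec EcG; apply: IH => e.
by rewrite mem_cat => /orP [/EcG|/r_edges_answers_sub].
Qed.

Lemma explored_cat j L Ec e : e \in Ec -> e \in explored ord r K j L Ec.
Proof. by elim: j L Ec => //= j IH L Ec He; apply: IH; rewrite mem_cat He. Qed.

Lemma incident_in_r_edges L v g :
  v \in L -> g \in G -> v \in g -> g \in r_edges r (nbs_answers ord K L).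
Proof.
move=> Hv Hg Hvg; have gv : g \in ord v by rewrite (ord_valid v).2 Hg Hvg.
have Hi : (index g (ord v) < size (ord v))%N by rewrite index_mem.
rewrite mem_filter (G_unif Hg) eqxx mem_pmap map_id; apply/mapP.
exists (v, index g (ord v)); last by rewrite /= /nb_answer Hi nth_index.
apply: allpairs_f => //; rewrite mem_iota add0n.
by rewrite (leq_trans Hi) // (size_ord ord_valid) deg_le.
Qed.

Lemma incident_in_edge_vertices L v g y :
  v \in L -> g \in G -> v \in g -> y \in g -> y \in edge_vertices r (nbs_answers ord K L).
Proof.
move=> Hv Hg Hvg Hy; apply/flattenP; exists (enum g); last by rewrite mem_enum.
exact: map_f (incident_in_r_edges Hv Hg Hvg).
Qed.

Lemma explored_hops j L Ec k u y g :
  u \in L -> hops G k u y -> (k < j)%N -> g \in G -> y \in g ->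
  g \in explored ord r K j L Ec.
Proof.
elim: j L Ec k u => // j IH L Ec [|k] u Hu /= Hhops Hk Hg Hy.
  by subst u; apply: explored_cat; rewrite mem_cat (incident_in_r_edges Hu Hg Hy) orbT.
case: Hhops => [Hhops|[g' Hg' [Hug' [z Hz Hhops]]]].
  by apply: (IH _ _ k u) => //; rewrite mem_cat Hu.
apply: (IH _ _ k z) => //.
by rewrite mem_cat (incident_in_edge_vertices Hu Hg' Hug' Hz) orbT.
Qed.

End ExplorationReach.

Definition search_from_edge (V : finType) (F : {set {set V}}) (n r K D : nat)
    (o : option {set 'I_n}) : alg n :=
  if o is Some e then
    if #|e| == r then explore r K D (enum e) [::] (fun Ec => Ret n (~~ has_copy_in F Ec))
    else Ret n true
  else Ret n true.

Definition tester_round (V : finType) (F : {set {set V}}) (n r K D : nat) : alg n.+1 :=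
  QRand (fun v : 'I_n.+1 => QRand (fun i : 'I_K.+1 => QNb v i (search_from_edge F r K D))).

(* The preliminary test only matters for an edgeless [F], which embeds into
   every graph with at least [#|V|] vertices. *)
Definition tester (V : finType) (F : {set {set V}}) (n r K D T : nat) : alg n.+1 :=
  if has_copy_in F ([::] : seq {set 'I_n.+1}) then Ret n.+1 false
  else alg_repeat (tester_round F n r K D) T.

Section TesterQueries.
Variables (V : finType) (F : {set {set V}}) (r K D : nat).

Lemma nqueries_search_from_edge n (o : option {set 'I_n}) :
  (nqueries (search_from_edge F r K D o) <= r * K * \sum_(i < D) (1 + r * K) ^ i)%N.
Proof.
case: o => [e|] //=; case: eqP => // He.
rewrite -[X in (_ <= X * _ * _)%N]He cardE -[X in (_ <= X)%N]addn0.
exact: nqueries_explore.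
Qed.

Lemma nqueries_tester_round n : (nqueries (tester_round F n r K D) <= (1 + r * K) ^ D)%N.
Proof.
have geom : ((1 + r * K) ^ D = (r * K * \sum_(i < D) (1 + r * K) ^ i).+1)%N.
  by rewrite add1n -[in LHS](@prednK (_ ^ D)) ?expn_gt0 // predn_exp.
rewrite geom; apply/bigmax_leqP => v _; apply/bigmax_leqP => i _; rewrite ltnS.
by apply/bigmax_leqP => o _; exact: nqueries_search_from_edge.
Qed.

Lemma nqueries_tester n T : (nqueries (tester F n r K D T) <= T * (1 + r * K) ^ D)%N.
Proof.
rewrite /tester; case: ifP => //= _.
by rewrite (leq_trans (nqueries_alg_repeat _ _)) // leq_mul2l nqueries_tester_round orbT.
Qed.

End TesterQueries.

Lemma mean_le_1subr (R : numFieldType) (N : nat) (a b : 'I_N.+1 -> R) :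
  (forall i, a i <= 1 - b i) -> (\sum_i a i) / N.+1%:R <= 1 - (\sum_i b i) / N.+1%:R.
Proof.
move=> ab; rewrite ler_pdivrMr ?ltr0Sn // mulrBl mul1r divfK ?pnatr_eq0 //.
by apply: le_trans (ler_sum _ (fun i _ => ab i)) _; rewrite sumrB sumr_const card_ord.
Qed.

Lemma avgdeg_uniform (R : realType) n r (G : {set {set 'I_n}}) :
  uniform r G -> avgdeg R G = (r * #|G|)%:R / n%:R.
Proof. by move=> G_unif; rewrite /avgdeg -natr_sum -(sum_card_incident G_unif). Qed.

Lemma bernoulli_1subr (R : realFieldType) (p : R) T :
  0 <= p <= 1 -> (1 - p) ^+ T * (1 + p * T%:R) <= 1.
Proof.
move=> /andP [p_ge0 p_le1]; elim: T => [|T IH]; first by rewrite expr0 mulr0 addr0 mul1r.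
have q_ge0 : 0 <= (1 - p) ^+ T by rewrite exprn_ge0 // subr_ge0.
have step : (1 - p) * (1 + p * T.+1%:R) <= 1 + p * T%:R.
  have : 0 <= p * p * T.+1%:R by rewrite !mulr_ge0.
  rewrite -natr1; lra.
by rewrite exprSr -mulrA (le_trans (ler_wpM2l q_ge0 step)).
Qed.

Lemma expr_le_third (R : realFieldType) (a p : R) T :
  0 < p -> 0 <= a -> a <= 1 - p -> 2 <= p * T%:R -> a ^+ T <= 1 / 3.
Proof.
move=> p_gt0 a_ge0 a_le pT.
have p_le1 : p <= 1 by rewrite -subr_ge0 (le_trans a_ge0).
have := bernoulli_1subr T (p := p); rewrite ltW ?p_le1 // => /(_ isT) bern.
have qT_le : (1 - p) ^+ T <= 1 / 3.
  have qT_ge0 : 0 <= (1 - p) ^+ T by rewrite exprn_ge0 // subr_ge0.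
  rewrite ler_pdivlMr ?ltr0n //; apply: le_trans bern.
  by rewrite ler_wpM2l // -[3]/(1 + 2) lerD2l.
by rewrite (le_trans _ qT_le) // lerXn2r ?nnegrE ?subr_ge0.
Qed.

Section TesterAnalysis.
Variables (V : finType) (F : {set {set V}}) (r D : nat).
Hypotheses (r_gt0 : (0 < r)%N) (F_unif : uniform r F) (F_conn : hconnected F)
  (F_FE : in_FE F) (F_diam : diam_is F D).
Variables (R : realType) (n K : nat).
Variables (G : {set {set 'I_n.+1}}) (ord : 'I_n.+1 -> seq {set 'I_n.+1}).
Hypotheses (G_unif : uniform r G) (ord_valid : valid_order G ord)
  (deg_le : forall v, (deg G v <= K)%N).
Local Notation acc := (acc_prob R G ord).

Lemma acc_search_free (o : option {set 'I_n.+1}) :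
  Ffree F G -> acc (search_from_edge F r K D o) = 1.
Proof.
move=> G_free; case: o => [e|] //=; case: eqP => // _; rewrite acc_prob_explore /=.
suff /negbTE -> : ~~ has_copy_in F (explored ord r K D (enum e) [::]) by [].
have nilG : {subset [::] <= G} by [].
by apply/negP => /(has_copy_in_sound (explored_sub ord_valid nilG)).
Qed.

Lemma acc_search_copy_edge e :
  e \in copy_edges F G -> acc (search_from_edge F r K D (Some e)) = 0.
Proof.
move=> He; have /copy_edgesP [f [f_inj f_G [e1 He1 Ee]]] := He.
rewrite /= (G_unif (copy_edges_sub He)) eqxx acc_prob_explore /=.
suff -> : has_copy_in F (explored ord r K D (enum e) [::]) by [].
apply/has_copy_inP; exists f; split => // h Hh.
have [x [s [k [Hx Hs Hk Hhops]]]] := in_FE_hops r_gt0 F_unif F_conn F_FE F_diam He1 Hh.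
apply: (explored_hops G_unif ord_valid deg_le [::] _ (hops_imset f_G Hhops) Hk).
- by rewrite mem_enum Ee imset_f.
- exact: f_G.
- exact: imset_f.
Qed.

Lemma acc_tester_free T : Ffree F G -> acc (tester F n r K D T) = 1.
Proof.
move=> G_free; have nilG : {subset [::] <= G} by [].
rewrite /tester ifF; last by apply/negbTE/negP => /(has_copy_in_sound nilG).
rewrite acc_prob_alg_repeat /=.
under eq_bigr do under eq_bigr do rewrite acc_search_free //.
by rewrite !sumr_const !card_ord !divff ?pnatr_eq0 // ?expr1n.
Qed.

Lemma acc_tester_round_le :
  acc (tester_round F n r K D) <= 1 - (r * #|copy_edges F G|)%:R / (n.+1 * K.+1)%:R.
Proof.
pose hits_copy (v : 'I_n.+1) (i : 'I_K.+1) :=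
  (i < size (ord v))%N && (nth set0 (ord v) i \in copy_edges F G).
have search_le v (i : 'I_K.+1) :
    acc (QNb v i (search_from_edge F r K D)) <= 1 - (hits_copy v i)%:R.
  rewrite /hits_copy /=; case: (boolP (_ && _)) => [/andP [Hi Hcopy]|_]; last first.
    by rewrite subr0 acc_prob_le1.
  by rewrite /nb_answer Hi acc_search_copy_edge // subrr.
have count_hits : (\sum_v \sum_i hits_copy v i = r * #|copy_edges F G|)%N.
  rewrite -(sum_card_incident (fun e He => G_unif (copy_edges_sub He))).
  apply: eq_bigr => v _; rewrite sum_nth_count; last by rewrite (size_ord ord_valid) leqW.
  exact: count_mem_ord (@copy_edges_sub _ _ _ _).
rewrite /=; apply: le_trans (mean_le_1subr (fun v => mean_le_1subr (search_le v))) _.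
rewrite -mulr_suml -mulrA -invfM -natrM mulnC -count_hits natr_sum.
by under eq_bigr do rewrite natr_sum.
Qed.

Lemma acc_tester_round_far (eps : R) :
  far eps r F G -> ~~ has_copy_in F ([::] : seq {set 'I_n.+1}) ->
  acc (tester_round F n r K D) <= 1 - eps * avgdeg R G / K.+1%:R.
Proof.
move=> G_far no_copy; apply: le_trans acc_tester_round_le _.
rewrite lerD2l lerN2 (avgdeg_uniform _ G_unif) mulrA -mulrA -invfM -natrM.
rewrite ler_pM2r ?invr_gt0 ?ltr0n ?muln_gt0 // !natrM mulrCA ler_wpM2l //.
exact: far_copy_edges G_unif no_copy G_far.
Qed.

Lemma acc_tester_far (eps p : R) T :
  far eps r F G -> 0 < p -> p <= eps * avgdeg R G / K.+1%:R -> 2 <= p * T%:R ->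
  acc (tester F n r K D T) <= 1 / 3.
Proof.
move=> G_far p_gt0 p_le pT; rewrite /tester; case: ifP => [_ /=|/negbT no_copy].
  by rewrite divr_ge0.
rewrite acc_prob_alg_repeat; apply: expr_le_third p_gt0 (acc_prob_ge0 _ _ _ _) _ pT.
by rewrite (le_trans (acc_tester_round_far G_far no_copy)) // lerD2l lerN2.
Qed.

End TesterAnalysis.

Lemma deg_le_maxdeg n (G : {set {set 'I_n}}) v : (deg G v <= maxdeg G)%N.
Proof. exact: leq_bigmax. Qed.

Lemma deg_le_truncn (R : realType) n (G : {set {set 'I_n}}) (x : R) v :
  (maxdeg G)%:R <= x -> (deg G v <= Num.truncn x)%N.
Proof.
by move=> maxG; rewrite truncn_ge_nat ?(le_trans _ maxG) // ler_nat deg_le_maxdeg.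
Qed.

Lemma maxdeg_gt0 (R : realType) n (G : {set {set 'I_n}}) :
  0 < avgdeg R G -> (0 < maxdeg G)%N.
Proof.
rewrite lt0n; apply: contraTneq => max0.
rewrite /avgdeg big1 ?mul0r ?ltxx // => v _.
by have := deg_le_maxdeg G v; rewrite max0 leqn0 => /eqP ->.
Qed.

Lemma natr_nqueries_tester (R : realType) (V : finType) (F : {set {set V}})
    n r D T (c d : R) :
  0 <= c -> 0 <= d ->
  (nqueries (tester F n r (Num.truncn (c * d)) D T))%:R <=
    T%:R * (1 + r%:R * c) ^+ D * Num.max 1 d ^+ D.
Proof.
move=> c_ge0 d_ge0; set K := Num.truncn (c * d); set M := Num.max 1 d.
have K_le : K%:R <= c * d by rewrite truncn_le mulr_ge0.
have M_ge1 : 1 <= M by rewrite le_max lexx.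
have cd_le : c * d <= c * M by rewrite ler_wpM2l // le_max lexx orbT.
have rK_le : r%:R * K%:R <= r%:R * (c * M) :> R by rewrite ler_wpM2l // (le_trans K_le).
apply: le_trans (_ : (T * (1 + r * K) ^ D)%:R <= _).
  by rewrite ler_nat nqueries_tester.
rewrite natrM natrX -mulrA -exprMn ler_wpM2l // lerXn2r ?nnegrE //.
- by rewrite mulr_ge0 ?addr_ge0 ?mulr_ge0 // (le_trans ler01).
- by rewrite natrD natrM; nra.
Qed.

Lemma rejection_rate_ge (R : realType) (eps c d : R) :
  0 < eps -> 0 < c -> 1 <= c * d ->
  eps / (2 * c) <= eps * d / (Num.truncn (c * d)).+1%:R.
Proof.
move=> eps_gt0 c_gt0 cd_ge1.
have K_le : (Num.truncn (c * d))%:R <= c * d by rewrite truncn_le (le_trans ler01).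
rewrite ler_pdivrMr ?mulr_gt0 // mulrAC ler_pdivlMr ?ltr0Sn // -natr1.
by rewrite -mulrA; apply: ler_wpM2l; [exact: ltW | lra].
Qed.

Unset Implicit Arguments. Set Strict Implicit.

Theorem proposition4p7 (R : realType) (eps : R) (heps : 0 < eps)
    (r : nat) (hr : (2 <= r)%N)
    (V : finType) (F : {set {set V}})
    (hFunif : uniform r F) (hFconn : hconnected F) (hFE : in_FE F)
    (D : nat) (hD : diam_is F D)
    (c : R) (hc : 0 < c) :
  exists C : R, forall (n : nat) (d : R), 0 < d ->
    exists A : alg n,
      (nqueries A)%:R <= C * (Num.max 1 d) ^+ D /\
      forall (G : {set {set 'I_n}}) (ord : 'I_n -> seq {set 'I_n}),
        uniform r G -> valid_order G ord ->
        avgdeg R G = d -> (maxdeg G)%:R <= c * d ->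
        (Ffree F G -> 2 / 3 <= acc_prob R G ord A) /\
        (far eps r F G -> 2 / 3 <= 1 - acc_prob R G ord A).
Proof.
have r_gt0 : (0 < r)%N by apply: leq_trans hr.
pose p := eps / (2 * c); have p_gt0 : 0 < p by rewrite divr_gt0 ?mulr_gt0.
pose T := (Num.truncn (2 / p)).+1.
have pT : 2 <= p * T%:R by rewrite mulrC -ler_pdivrMr // ltW // truncnS_gt.
exists (T%:R * (1 + r%:R * c) ^+ D) => -[|n] d d_gt0.
  exists (Ret 0 true); split => [|G ord _ _ avgG].
    have M_ge0 : 0 <= Num.max 1 d by rewrite le_max ler01.
    by rewrite /= !mulr_ge0 // !exprn_ge0 // addr_ge0 // mulr_ge0 // ltW.
  by move: d_gt0; rewrite -avgG /avgdeg big_ord0 mul0r ltxx.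
pose K := Num.truncn (c * d); exists (tester F n r K D T).
split=> [|G ord G_unif ord_valid avgG maxG].
  exact: natr_nqueries_tester (ltW hc) (ltW d_gt0).
have deg_le v : (deg G v <= K)%N by exact: deg_le_truncn maxG.
split=> [G_free|G_far]; first by rewrite acc_tester_free //; lra.
have cd_ge1 : 1 <= c * d.
  by apply: le_trans maxG; rewrite ler1n (maxdeg_gt0 (R := R)) // avgG.
have := acc_tester_far r_gt0 hFunif hFconn hFE hD G_unif ord_valid deg_le G_far p_gt0 _ pT.
by rewrite avgG rejection_rate_ge // => /(_ isT); lra.
Qed.
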